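(* Let $r\ge4$, $l\ge r$, $\alpha,\beta\in\mathbb N$ with $\alpha+\beta=l-(r-2)$, let $N_G=\mathbb Z^r+\mathbb Z\frac1l(1,\ldots,1,\alpha,\beta)^{\intercal}$ (with $r-2$ entries equal to $1$), $\mathfrak L=\{x\in\mathbb R^r:x_1=\cdots=x_{r-2}\}$, $\overline{N_G}=N_G\cap\mathfrak L$ and $\overline{\sigma_0}=\mathrm{pos}(e_1,\ldots,e_r)\cap\mathfrak L$. Then the first primitive lattice point $\mathfrak n_G$ of $\overline{N_G}\setminus\{\mathbf 0\}$ on the ray $\mathbb R_{\ge0}\frac1{r-2}\sum_{i=1}^{r-2}e_i$ is $$\mathfrak n_G=\frac{1}{\gcd(\alpha,\beta,l)}\sum_{i=1}^{r-2}e_i,$$ so that the set of primitive minimal generators of $\overline{\sigma_0}$ is $\{\mathfrak n_G,e_{r-1},e_r\}$, and $$\mu_G:=\min\Big\{\varkappa\in\mathbb Q_{>0}:\varkappa\cdot\frac1{r-2}\sum_{i=1}^{r-2}e_i\in\overline{N_G}\setminus\{\mathbf0\}\Big\}=\frac{r-2}{\gcd(\alpha,\beta,l)}.$$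
   Context: $e_1,\ldots,e_r$ are the standard unit vectors of $\mathbb R^r$. *)

(* R : realType, vectors in R^r are row vectors 'rV[R]_r.
   Indices are 0-based: e_{i+1} of the paper is [unitv r i]. *)
From mathcomp Require Import all_boot all_order all_algebra.
From mathcomp Require Import reals.
Set Implicit Arguments. Unset Strict Implicit. Unset Printing Implicit Defensive.
Import Order.TTheory GRing.Theory Num.Theory.
Local Open Scope ring_scope.

Section Defs.
Variable R : realType.

(* standard unit vector e_{k+1} of R^r (zero vector if k >= r) *)
Definition unitv (r k : nat) : 'rV[R]_r := \row_(j < r) ((j : nat) == k)%:R.

Definition sumE (r : nat) : 'rV[R]_r := \sum_(i < r - 2) unitv r i.

Definition vG (r l alpha beta : nat) : 'rV[R]_r :=
  (l%:R)^-1 *: \row_(j < r)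
     (if ((j : nat) < r - 2)%N then 1 else if (j : nat) == (r - 2)%N then alpha%:R
      else beta%:R).

Definition inNG (r l alpha beta : nat) (x : 'rV[R]_r) : Prop :=
  exists (z : 'I_r -> int) (k : int),
    x = \row_(j < r) (z j)%:~R + k%:~R *: vG r l alpha beta.

Definition inL (r : nat) (x : 'rV[R]_r) : Prop :=
  forall i j : 'I_r, ((i : nat) < r - 2)%N -> ((j : nat) < r - 2)%N -> x 0 i = x 0 j.

Definition inNGbar (r l alpha beta : nat) (x : 'rV[R]_r) : Prop :=
  inNG l alpha beta x /\ inL x.

Definition inSigma0bar (r : nat) (x : 'rV[R]_r) : Prop :=
  (forall i, 0 <= x 0 i) /\ inL x.

Definition first_lattice_point (r : nat) (S : 'rV[R]_r -> Prop)
    (u p : 'rV[R]_r) : Prop :=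
  exists t : R, 0 < t /\ p = t *: u /\ S p /\
    (forall s : R, 0 < s -> S (s *: u) -> t <= s).

Definition extremal_ray_gen (r : nat) (C : 'rV[R]_r -> Prop) (u : 'rV[R]_r)
  : Prop :=
  u != 0 /\ C u /\
  (forall a b, C a -> C b -> a + b = u ->
     exists s : R, 0 <= s /\ a = s *: u).

Definition prim_min_gen (r : nat) (C S : 'rV[R]_r -> Prop) (p : 'rV[R]_r)
  : Prop :=
  exists u, extremal_ray_gen C u /\ first_lattice_point S u p.

End Defs.

From mathcomp Require Import all_boot all_order all_algebra.
From mathcomp Require Import reals.
From mathcomp Require Import zify.
Set Implicit Arguments. Unset Strict Implicit. Unset Printing Implicit Defensive.
Import Order.TTheory GRing.Theory Num.Theory.
Local Open Scope ring_scope.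

(* A point of L is determined by its first, (r-1)-th and r-th coordinates, so
   pos(e_1, ..., e_r) ∩ L is the simplicial cone spanned by sum_{i <= r-2} e_i,
   e_{r-1} and e_r, and these span its extremal rays.  A point of N_G is an
   integral vector plus k v_G.  If s sum_{i <= r-2} e_i lies in N_G, then k/l
   times alpha, beta (last two coordinates) and l is integral, hence by Bezout so
   is g k / l, and s - k / l is integral (first coordinate): thus g s is a
   positive integer.  Conversely (l/g) v_G is (1/g) sum_{i <= r-2} e_i up to an
   integral vector.  On the rays of e_{r-1} and e_r the first coordinate forces
   k / l to be integral, so these generators are primitive. *)

Lemma gt0_intr_ge1 (R : archiNumDomainType) (x : R) :
  x \is a Num.int -> 0 < x -> 1 <= x.
Proof. by move=> xZ x_gt0; rewrite -(gtr0_norm x_gt0) norm_intr_ge1 ?gt_eqF. Qed.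

Lemma mulr_gcdn_int (R : archiNumDomainType) (x : R) (a b : nat) :
  x * a%:R \is a Num.int -> x * b%:R \is a Num.int ->
  x * (gcdn a b)%:R \is a Num.int.
Proof.
move=> xaZ xbZ; have [u [v Euv]] := Bezoutz a b.
have -> : (gcdn a b)%:R = ((u * a + v * b)%:~R : R) by rewrite Euv.
rewrite intrD !intrM mulrDr !(mulrCA x).
by rewrite rpredD // rpredM ?intr_int.
Qed.

Section FirstLatticePoint.
Variables (R : realType) (r : nat) (S : 'rV[R]_r -> Prop) (w : 'rV[R]_r) (s0 : R).
Hypotheses (s0_gt0 : 0 < s0) (S_s0w : S (s0 *: w))
  (s0_min : forall s : R, 0 < s -> S (s *: w) -> s0 <= s).

Lemma first_lattice_pointP (a : R) (p : 'rV[R]_r) : 0 < a ->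
  first_lattice_point S (a *: w) p <-> p = s0 *: w.
Proof.
move=> a_gt0; split.
  move=> [t [t_gt0 [-> [Sp t_min]]]]; rewrite scalerA in Sp *.
  have ta_ge : s0 <= t * a := s0_min (mulr_gt0 t_gt0 a_gt0) Sp.
  have t_le : t <= s0 / a.
    by apply: t_min; [rewrite divr_gt0 | rewrite scalerA divfK // gt_eqF].
  rewrite ler_pdivlMr // in t_le.
  by congr (_ *: _); apply/le_anti; rewrite t_le ta_ge.
move=> ->; exists (s0 / a); split; first by rewrite divr_gt0.
split; first by rewrite scalerA divfK // gt_eqF.
split=> // s s_gt0 Ss; rewrite ler_pdivrMr //.
by apply: s0_min; [rewrite mulr_gt0 | rewrite -scalerA].
Qed.

End FirstLatticePoint.

Section ExtremalRay.
Variables (R : realType) (r : nat) (C : 'rV[R]_r -> Prop).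

Lemma extremal_ray_summand (u v w : 'rV[R]_r) (i : 'I_r) :
  extremal_ray_gen C u -> C v -> C w -> v + w = u ->
  u 0 i != 0 -> v 0 i = u 0 i -> v = u.
Proof.
move=> [_ [_ ext]] Cv Cw vwu ui_neq0 vi_eq; have [s [_ v_eq]] := ext v w Cv Cw vwu.
suff s1 : s = 1 by rewrite v_eq s1 scale1r.
by apply: (mulIf ui_neq0); rewrite mul1r -[RHS]vi_eq v_eq mxE.
Qed.

Lemma extremal_ray_gen_support (u : 'rV[R]_r) :
  (forall x, C x -> forall i, 0 <= x 0 i) -> u != 0 -> C u ->
  (forall v, C v -> (forall i, u 0 i = 0 -> v 0 i = 0) ->
     exists s, 0 <= s /\ v = s *: u) ->
  extremal_ray_gen C u.
Proof.
move=> C_ge0 u_neq0 Cu supp; split=> //; split=> // a b Ca Cb abu.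
apply: supp => // i ui0; have := congr1 (fun M : 'rV[R]_r => M 0 i) abu.
by rewrite mxE ui0 => /eqP; rewrite paddr_eq0 ?C_ge0 // => /andP [/eqP].
Qed.

End ExtremalRay.

Section Sigma0bar.
Variables (R : realType) (r : nat).
Hypothesis r_gt2 : (2 < r)%N.

Lemma unitvE (k : nat) (j : 'I_r) : unitv R r k 0 j = ((j : nat) == k)%:R.
Proof. by rewrite mxE. Qed.

Lemma sumEE (j : 'I_r) : sumE R r 0 j = ((j : nat) < r - 2)%N%:R.
Proof.
rewrite /sumE summxE; elim: (r - 2)%N => [|n IHn]; first by rewrite big_ord0.
rewrite big_ord_recr /= IHn unitvE ltnS.
by case: ltngtP; rewrite /= ?addr0 ?add0r.
Qed.

Definition i_first : 'I_r := @Ordinal r 0 ltac:(lia).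
Definition i_alpha : 'I_r := @Ordinal r (r - 2) ltac:(lia).
Definition i_beta : 'I_r := @Ordinal r (r - 1) ltac:(lia).

Lemma ord_blocks (j : 'I_r) : [\/ ((j : nat) < r - 2)%N, j = i_alpha | j = i_beta].
Proof.
have [j_lt|j_ge] := ltnP j (r - 2); first by constructor 1.
have j_lt_r := ltn_ord j.
have [j_eq|j_neq] := eqVneq (j : nat) (r - 2)%N.
  by constructor 2; apply: val_inj.
by constructor 3; apply: val_inj => /=; lia.
Qed.

Definition combL (a b c : R) : 'rV[R]_r :=
  a *: sumE R r + b *: unitv R r (r - 2) + c *: unitv R r (r - 1).

Lemma combLE a b c (j : 'I_r) :
  combL a b c 0 j = if ((j : nat) < r - 2)%N then a
                    else if (j : nat) == (r - 2)%N then b else c.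
Proof.
rewrite !mxE sumEE; have r1_neq_r2 : (r - 1 == r - 2)%N = false by lia.
case: (ord_blocks j) => [j_lt | -> | ->] /=.
- have [-> ->] : ((j : nat) == r - 2)%N = false /\ ((j : nat) == r - 1)%N = false.
    by split; lia.
  by rewrite j_lt mulr1 !mulr0 !addr0.
- by rewrite ltnn eqxx eq_sym r1_neq_r2 mulr1 !mulr0 add0r addr0.
- by rewrite r1_neq_r2 (_ : (r - 1 < r - 2)%N = false) ?eqxx ?mulr1 ?mulr0 ?add0r //; lia.
Qed.

Lemma combL_first a b c : combL a b c 0 i_first = a.
Proof. by rewrite combLE /=; case: ltnP => //; lia. Qed.

Lemma combL_alpha a b c : combL a b c 0 i_alpha = b.
Proof. by rewrite combLE /= ltnn eqxx. Qed.

Lemma combL_beta a b c : combL a b c 0 i_beta = c.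
Proof. by rewrite combLE /= ifF ?ifF //; lia. Qed.

Lemma combLD a b c a' b' c' :
  combL a b c + combL a' b' c' = combL (a + a') (b + b') (c + c').
Proof. by apply/rowP => j; rewrite mxE !combLE; case: ifP => // _; case: ifP. Qed.

Lemma inL_combL (x : 'rV[R]_r) :
  inL x -> x = combL (x 0 i_first) (x 0 i_alpha) (x 0 i_beta).
Proof.
move=> xL; apply/rowP => j; rewrite combLE.
case: (ord_blocks j) => [j_lt | -> | ->] /=; first by rewrite j_lt; apply: xL => //=; lia.
  by rewrite ltnn eqxx.
by rewrite ifF ?ifF //; lia.
Qed.

Lemma inSigma0bar_combL a b c :
  0 <= a -> 0 <= b -> 0 <= c -> inSigma0bar (combL a b c).
Proof.
move=> a_ge0 b_ge0 c_ge0; split.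
  by move=> i; rewrite combLE; case: ifP => // _; case: ifP.
by move=> i j i_lt j_lt; rewrite !combLE i_lt j_lt.
Qed.

Lemma combL100 : combL 1 0 0 = sumE R r.
Proof. by rewrite /combL !scale0r !addr0 scale1r. Qed.

Lemma combL010 : combL 0 1 0 = unitv R r (r - 2).
Proof. by rewrite /combL !scale0r add0r addr0 scale1r. Qed.

Lemma combL001 : combL 0 0 1 = unitv R r (r - 1).
Proof. by rewrite /combL !scale0r !add0r scale1r. Qed.

Lemma sumE_neq0 : sumE R r != 0.
Proof.
apply: contra_neq (@oner_neq0 R) => sumE0.
by rewrite -(combL_first 1 0 0) combL100 sumE0 mxE.
Qed.

Lemma combLZ s a b c : s *: combL a b c = combL (s * a) (s * b) (s * c).
Proof. by rewrite /combL !scalerDr !scalerA. Qed.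

Lemma extremal_ray_Sigma0barP (u : 'rV[R]_r) :
  extremal_ray_gen (@inSigma0bar R r) u ->
  exists2 a : R, 0 < a &
    [\/ u = a *: sumE R r, u = a *: unitv R r (r - 2) | u = a *: unitv R r (r - 1)].
Proof.
move=> u_ext; have [u_neq0 [[u_ge0 /inL_combL u_eq] _]] := u_ext.
have summand := extremal_ray_summand u_ext.
have C a b c := @inSigma0bar_combL a b c.
have [a0 | a_neq0] := eqVneq (u 0 i_first) 0; last first.
  exists (u 0 i_first); first by rewrite lt0r a_neq0 u_ge0.
  constructor 1; rewrite -combL100 combLZ mulr1 mulr0.
  apply/esym/(summand _ (combL 0 (u 0 i_alpha) (u 0 i_beta)) i_first) => //.
  - by apply: C; rewrite ?lexx.
  - by apply: C; rewrite ?lexx.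
  - by rewrite [RHS]u_eq combLD addr0 !add0r.
  - exact: combL_first.
have [b0 | b_neq0] := eqVneq (u 0 i_alpha) 0; last first.
  exists (u 0 i_alpha); first by rewrite lt0r b_neq0 u_ge0.
  constructor 2; rewrite -combL010 combLZ mulr1 mulr0.
  apply/esym/(summand _ (combL 0 0 (u 0 i_beta)) i_alpha) => //.
  - by apply: C; rewrite ?lexx.
  - by apply: C; rewrite ?lexx.
  - by rewrite [RHS]u_eq combLD a0 !addr0 !add0r.
  - exact: combL_alpha.
exists (u 0 i_beta).
  rewrite lt0r u_ge0 andbT; apply: contra u_neq0 => /eqP c0.
  by rewrite u_eq a0 b0 c0 /combL !scale0r !addr0.
by constructor 3; rewrite -combL001 combLZ !mulr0 mulr1 [LHS]u_eq a0 b0.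
Qed.

Lemma extremal_ray_sumE : extremal_ray_gen (@inSigma0bar R r) (sumE R r).
Proof.
apply: extremal_ray_gen_support => [x [] // | | | v [v_ge0 vL] v_supp].
- exact: sumE_neq0.
- by rewrite -combL100; apply: inSigma0bar_combL; rewrite ?ler01 ?lexx.
exists (v 0 i_first); split; first exact: v_ge0.
have [va0 vb0] : v 0 i_alpha = 0 /\ v 0 i_beta = 0.
  by split; apply: v_supp; rewrite -combL100 ?combL_alpha ?combL_beta.
by rewrite {1}(inL_combL vL) va0 vb0 -combL100 combLZ mulr1 !mulr0.
Qed.

Lemma inL_unitv (k : nat) : (r - 2 <= k)%N -> inL (unitv R r k).
Proof.
move=> k_ge i j i_lt j_lt; rewrite !unitvE.
by have [-> ->] : ((i : nat) == k) = false /\ ((j : nat) == k) = false by split; lia.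
Qed.

Lemma extremal_ray_unitv (k : nat) : (r - 2 <= k < r)%N ->
  extremal_ray_gen (@inSigma0bar R r) (unitv R r k).
Proof.
move=> /andP [k_ge k_lt]; pose ik : 'I_r := Ordinal k_lt.
have unitv_ik : unitv R r k 0 ik = 1 by rewrite unitvE eqxx.
apply: extremal_ray_gen_support => [x [] // | | | v [v_ge0 _] v_supp].
- by apply: contra_neq (@oner_neq0 R) => ek0; rewrite -unitv_ik ek0 mxE.
- by split=> [i|]; [rewrite unitvE ler0n | apply: inL_unitv].
exists (v 0 ik); split; first exact: v_ge0.
apply/rowP => j; rewrite mxE unitvE; have [j_eq | j_neq] := eqVneq (j : nat) k.
  by rewrite mulr1; congr (v 0 _); apply: val_inj.
by rewrite mulr0 v_supp // unitvE (negbTE j_neq).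
Qed.

End Sigma0bar.

Section LatticeNG.
Variables (R : realType) (r l alpha beta : nat).
Hypotheses (r_gt2 : (2 < r)%N) (l_gt0 : (0 < l)%N).

Local Notation g := (gcdn (gcdn alpha beta) l).
Local Notation NGbar := (@inNGbar R r l alpha beta).

Definition vG_num (j : 'I_r) : nat :=
  if ((j : nat) < r - 2)%N then 1 else if (j : nat) == (r - 2)%N then alpha else beta.

Lemma vG_num_first : vG_num (i_first r_gt2) = 1%N.
Proof. by rewrite /vG_num /= ifT //; lia. Qed.

Lemma vG_num_alpha : vG_num (i_alpha r_gt2) = alpha.
Proof. by rewrite /vG_num /= ltnn eqxx. Qed.

Lemma vG_num_beta : vG_num (i_beta r_gt2) = beta.
Proof. by rewrite /vG_num /= ifF ?ifF //; lia. Qed.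

Lemma vGE (j : 'I_r) : vG R r l alpha beta 0 j = (vG_num j)%:R / l%:R.
Proof. by rewrite !mxE mulrC /vG_num; case: ifP => _; [|case: ifP]. Qed.

Lemma inNG_coord (x : 'rV[R]_r) : inNG l alpha beta x ->
  exists k : int, forall j, x 0 j - k%:~R / l%:R * (vG_num j)%:R \is a Num.int.
Proof.
move=> [z [k ->]]; exists k => j.
by rewrite 3!mxE vGE [_ / l%:R]mulrC mulrA addrK intr_int.
Qed.

Lemma gcd_gt0 : (0 < g)%N.
Proof. by rewrite gcdn_gt0 l_gt0 orbT. Qed.

Lemma inNG_sumE_ge (s : R) : 0 < s -> inNG l alpha beta (s *: sumE R r) -> g%:R^-1 <= s.
Proof.
move=> s_gt0 /inNG_coord [k xZ]; set x := k%:~R / l%:R in xZ.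
rewrite -combL100 combLZ mulr1 !mulr0 in xZ.
have := xZ (i_first r_gt2); have := xZ (i_alpha r_gt2); have := xZ (i_beta r_gt2).
rewrite combL_first combL_alpha combL_beta vG_num_first vG_num_alpha vG_num_beta.
rewrite !sub0r !rpredN mulr1 => xbZ xaZ sxZ.
have xlZ : x * l%:R \is a Num.int by rewrite divfK ?intr_int // pnatr_eq0 -lt0n.
have xgZ := mulr_gcdn_int (mulr_gcdn_int xaZ xbZ) xlZ.
have gsZ : g%:R * s \is a Num.int.
  by rewrite -(subrK x s) mulrDr [_ * x]mulrC rpredD // rpredM ?natr_int.
rewrite -[_^-1]mulr1 ler_pdivrMl ?ltr0n ?gcd_gt0 //.
by apply: gt0_intr_ge1 gsZ _; rewrite mulr_gt0 ?ltr0n ?gcd_gt0.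
Qed.

Lemma inNG_unitv_ge (k : nat) (s : R) : (r - 2 <= k < r)%N -> 0 < s ->
  inNG l alpha beta (s *: unitv R r k) -> 1 <= s.
Proof.
move=> /andP [k_ge k_lt] s_gt0 /inNG_coord [m xZ]; set x := m%:~R / l%:R in xZ.
have := xZ (i_first r_gt2); rewrite mxE unitvE vG_num_first /= eq_sym eqn0Ngt.
rewrite (_ : (0 < k)%N) ?mulr0 ?sub0r ?rpredN ?mulr1 => [xZ0|]; last by lia.
have := xZ (Ordinal k_lt); rewrite mxE unitvE /= eqxx mulr1 => sxZ.
apply: (gt0_intr_ge1 _ s_gt0).
by rewrite -(subrK (x * (vG_num (Ordinal k_lt))%:R) s) rpredD // rpredM // natr_int.
Qed.

Lemma inNGbar_unitv (k : nat) : (r - 2 <= k)%N -> NGbar (unitv R r k).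
Proof.
move=> k_ge; split; last exact: inL_unitv.
exists (fun i : 'I_r => ((i : nat) == k : nat)%:Z), 0.
by apply/rowP => i; rewrite !mxE mul0r addr0.
Qed.

Lemma inNGbar_nG : NGbar (g%:R^-1 *: sumE R r).
Proof.
have g_unit : (g%:R : R) \is a GRing.unit by rewrite unitfE pnatr_eq0 -lt0n gcd_gt0.
have g_dvd_vG_num (j : 'I_r) : (r - 2 <= j)%N -> (g %| vG_num j)%N.
  rewrite /vG_num leqNgt => /negbTE ->; case: ifP => _.
    exact: dvdn_trans (dvdn_gcdl _ _) (dvdn_gcdl _ _).
  exact: dvdn_trans (dvdn_gcdl _ _) (dvdn_gcdr _ _).
have k_div_l : ((l %/ g)%:Z)%:~R / l%:R = g%:R^-1 :> R.
  rewrite -[in X in _ / X](divnK (dvdn_gcdr _ _ : (g %| l)%N)) natrM invfM mulrA.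
  by rewrite divff ?mul1r // pnatr_eq0 -lt0n divn_gt0 ?gcd_gt0 // dvdn_leq ?dvdn_gcdr.
split; last by move=> i j i_lt j_lt; rewrite !mxE !sumEE i_lt j_lt.
exists (fun j : 'I_r => if ((j : nat) < r - 2)%N then 0 else - (vG_num j %/ g)%:Z), (l %/ g)%:Z.
apply/rowP => j; rewrite 4!mxE vGE sumEE [_ / l%:R]mulrC mulrA k_div_l.
case: ltnP => j_lt /=; first by rewrite /vG_num j_lt add0r.
rewrite intrN (_ : ((vG_num j %/ g)%N%:Z)%:~R = (vG_num j %/ g)%N%:R) //.
rewrite natr_div ?g_dvd_vG_num //.
by rewrite mulr0 [_^-1 * _]mulrC addNr.
Qed.

Lemma first_lattice_point_sumE (a : R) (p : 'rV[R]_r) : 0 < a ->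
  first_lattice_point NGbar (a *: sumE R r) p <-> p = g%:R^-1 *: sumE R r.
Proof.
apply: first_lattice_pointP; first by rewrite invr_gt0 ltr0n gcd_gt0.
  exact: inNGbar_nG.
by move=> s s_gt0 [/(inNG_sumE_ge s_gt0)].
Qed.

Lemma first_lattice_point_unitv (k : nat) (a : R) (p : 'rV[R]_r) :
  (r - 2 <= k < r)%N -> 0 < a ->
  first_lattice_point NGbar (a *: unitv R r k) p <-> p = unitv R r k.
Proof.
move=> k_range; rewrite -{2}[unitv R r k]scale1r.
apply: first_lattice_pointP; first exact: ltr01.
  by rewrite scale1r; apply: inNGbar_unitv; case/andP: k_range.
by move=> s s_gt0 [/(inNG_unitv_ge k_range s_gt0)].
Qed.

Lemma prim_min_gen_Sigma0bar (p : 'rV[R]_r) :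
  prim_min_gen (@inSigma0bar R r) NGbar p <->
  [\/ p = g%:R^-1 *: sumE R r, p = unitv R r (r - 2) | p = unitv R r (r - 1)].
Proof.
have alpha_range : (r - 2 <= r - 2 < r)%N by lia.
have beta_range : (r - 2 <= r - 1 < r)%N by lia.
split.
  move=> [u [/(extremal_ray_Sigma0barP r_gt2) [a a_gt0 u_eq] flp]].
  case: u_eq flp => -> flp.
  - by constructor 1; apply/(first_lattice_point_sumE _ a_gt0).
  - by constructor 2; apply/(first_lattice_point_unitv _ alpha_range a_gt0).
  - by constructor 3; apply/(first_lattice_point_unitv _ beta_range a_gt0).
case=> ->.
- exists (sumE R r); split; first exact: extremal_ray_sumE r_gt2.
  by rewrite -[X in first_lattice_point _ X]scale1r; apply/first_lattice_point_sumE.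
- exists (unitv R r (r - 2)); split; first exact: extremal_ray_unitv.
  by rewrite -[X in first_lattice_point _ X]scale1r; apply/first_lattice_point_unitv.
- exists (unitv R r (r - 1)); split; first exact: extremal_ray_unitv.
  by rewrite -[X in first_lattice_point _ X]scale1r; apply/first_lattice_point_unitv.
Qed.

Lemma ratr_mu_G :
  ratr ((r - 2)%N%:R / g%:R : rat) *: ((r - 2)%:R^-1 *: sumE R r) = g%:R^-1 *: sumE R r.
Proof.
rewrite scalerA fmorph_div !rmorph_nat mulrAC divff ?mul1r // pnatr_eq0; lia.
Qed.

Lemma mu_G_le (kappa : rat) : 0 < kappa ->
  NGbar (ratr kappa *: ((r - 2)%:R^-1 *: sumE R r)) -> (r - 2)%N%:R / g%:R <= kappa.
Proof.
move=> kappa_gt0 [kappa_NG _]; rewrite scalerA in kappa_NG.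
have r2_gt0 : 0 < ((r - 2)%:R : R) by rewrite ltr0n; lia.
have kappa_r2_gt0 : 0 < ratr kappa / (r - 2)%:R :> R by rewrite divr_gt0 ?ltr0q.
have := inNG_sumE_ge kappa_r2_gt0 kappa_NG.
by rewrite ler_pdivlMr // -(ler_rat R) fmorph_div !rmorph_nat mulrC.
Qed.

End LatticeNG.

Theorem lemma6p11 (R : realType) (r l alpha beta : nat)
  (hr : (4 <= r)%N) (hl : (r <= l)%N) (hab : (alpha + beta = l - (r - 2))%N) :
  let g := gcdn (gcdn alpha beta) l in
  let NGbar := @inNGbar R r l alpha beta in
  let d : 'rV[R]_r := ((r - 2)%:R)^-1 *: sumE R r in
  let nG : 'rV[R]_r := (g%:R)^-1 *: sumE R r in
  [/\ first_lattice_point NGbar d nG,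
      (forall p : 'rV[R]_r, prim_min_gen (@inSigma0bar R r) NGbar p <->
         [\/ p = nG, p = unitv R r (r - 2)%N | p = unitv R r (r - 1)%N]) &
      ((0 < ((r - 2)%N%:R / g%:R : rat)) /\
       NGbar (ratr (((r - 2)%N%:R / g%:R : rat)) *: d) /\
       ratr (((r - 2)%N%:R / g%:R : rat)) *: d != 0 /\
       (forall kappa : rat, 0 < kappa ->
          NGbar (ratr kappa *: d) -> ratr kappa *: d != 0 ->
          ((r - 2)%N%:R / g%:R : rat) <= kappa))].
Proof.
move=> g NGbar d nG.
have r_gt2 : (2 < r)%N by lia.
have l_gt0 : (0 < l)%N by lia.
have g_gt0 : (0 < g)%N := gcd_gt0 alpha beta l_gt0.
split.
- have r2_gt0 : 0 < ((r - 2)%:R : R)^-1 by rewrite invr_gt0 ltr0n; lia.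
  exact/(first_lattice_point_sumE alpha beta r_gt2 l_gt0 _ r2_gt0).
- exact: prim_min_gen_Sigma0bar.
- rewrite /d ratr_mu_G //; split; first by rewrite divr_gt0 ?ltr0n //; lia.
  split; first exact: inNGbar_nG.
  split; first by rewrite scaler_eq0 negb_or invr_eq0 pnatr_eq0 -lt0n g_gt0 sumE_neq0.
  by move=> kappa kappa_gt0 kappa_NG _; exact: (mu_G_le r_gt2 l_gt0 kappa_gt0 kappa_NG).
Qed.
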